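(* The scheme $\Upsilon$ is a commutative normal subgroup of $U_L$ and $U_L=U_\phi\ltimes\Upsilon$. Moreover, given $\beta=\alpha_{ij}\in\Phi(U_\phi)$, there exists a unique root $\alpha\in\Phi(\Upsilon)$ such that $\alpha+\beta$ is a root of $\mathrm{GL}_n$; explicitly $\alpha=\alpha_{pi}$ where $p\in\{1,\dots,d\}$ is determined by $p\equiv i\bmod d$, and then $\alpha+\beta=\alpha_{pj}$.
   Context: $G=\mathrm{GL}_n$ over a field, $1\le d\le n$, $\alpha_{ij}$ the root with root space $kE_{ij}$. $G_0=\{g\in\mathrm{GL}_n:g_{ij}=0\text{ unless }i\equiv j\bmod d\}$, $L$ a group identified with $G_0$ (the Levi quotient of the parahoric attached to $\check\rho/d$), and roots of $L$ are identified with the roots $\alpha_{ij}$, $i\equiv j\bmod d$, of $G_0$. $U_L$ is the unipotent radical of the upper triangular Borel of $L$, i.e. generated by the root subgroups $U_{\alpha_{ij}}$ with $i<j$, $i\equiv j\bmod d$. $U_\phi\subset U_L$ is the subgroup generated by the $U_\alpha$ with $\alpha\in\Phi(U_\phi)=\{\alpha_{ij}: d+1\le i\le n,\ i+d\le j\le n,\ j\equiv i\bmod d\}$, and $\Upsilon=\prod_{\alpha\in\Phi(\Upsilon)}U_\alpha$ with $\Phi(\Upsilon)=\{\alpha_{ij}:1\le i\le d,\ i+d\le j\le n,\ j\equiv i\bmod d\}$ (so $\Phi(\Upsilon)=\Phi(U_L)-\Phi(U_\phi)$). *)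

(* Indices: 'I_n is 0-based; the paper's index i (1-based)
   corresponds to the ordinal with value i-1. Congruences mod d are unaffected. *)
From HB Require Import structures.
From mathcomp Require Import all_boot all_order all_algebra.
Set Implicit Arguments. Unset Strict Implicit. Unset Printing Implicit Defensive.
Import GRing.Theory.
Local Open Scope ring_scope.

Definition Phi_UL (n d : nat) (i j : 'I_n) : bool :=
  ((i < j)%N && (i %% d == j %% d))%N.

(* Phi(U_phi): d+1 <= i (1-based), i.e. d <= i (0-based); i+d <= j; j = i mod d *)
Definition Phi_Uphi (n d : nat) (i j : 'I_n) : bool :=
  [&& (d <= i)%N, (i + d <= j)%N & (j %% d == i %% d)%N].

(* Phi(Upsilon): 1 <= i <= d (1-based), i.e. i < d (0-based); i+d <= j; j = i mod d *)
Definition Phi_Ups (n d : nat) (i j : 'I_n) : bool :=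
  [&& (i < d)%N, (i + d <= j)%N & (j %% d == i %% d)%N].

(* The R-points of the unipotent subgroup generated by the root subgroups
   U_{alpha_ij} = {1 + t E_ij}, (i,j) in a closed set Phi of positive roots:
   the matrices equal to the identity outside the entries indexed by Phi. *)
Definition supported_on (R : pzRingType) (n : nat) (Phi : 'I_n -> 'I_n -> bool)
  (g : 'M[R]_n) : Prop :=
  forall i j : 'I_n, ~~ Phi i j -> g i j = (i == j)%:R.

Definition U_L (R : pzRingType) (n d : nat) : 'M[R]_n -> Prop :=
  supported_on (@Phi_UL n d).
Definition U_phi (R : pzRingType) (n d : nat) : 'M[R]_n -> Prop :=
  supported_on (@Phi_Uphi n d).
Definition Upsilon (R : pzRingType) (n d : nat) : 'M[R]_n -> Prop :=
  supported_on (@Phi_Ups n d).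

Definition is_subgroup (R : comUnitRingType) (n : nat) (H : 'M[R]_n -> Prop) : Prop :=
  [/\ H 1%:M,
      forall g h, H g -> H h -> H (g *m h)
    & forall g, H g -> g \in unitmx /\ H (invmx g)].

(* The character alpha_ij = e_i - e_j of the diagonal torus, as a vector in Z^n. *)
Definition rootvec (n : nat) (i j : 'I_n) : 'I_n -> int :=
  fun k => ((k == i)%:R - (k == j)%:R)%R.

Definition is_root_GL (n : nat) (v : 'I_n -> int) : Prop :=
  exists p q : 'I_n, p != q /\ forall k, v k = rootvec p q k.

(* Every group in sight is of the form {g | g - 1 vanishes off Phi} for a set
   Phi of positive roots, and the product of two such differences only involves
   composable pairs (i, k), (k, j).  Roots in Phi(Upsilon) start in a row < d
   and end in a column >= d, so no two of them compose: Upsilon is abelian, and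
   no root of Phi(U_phi) (whose rows are >= d) composes with one of Upsilon
   either, so a * b = a + b - 1 for a in U_phi, b in Upsilon, and the factors of
   u in U_L are read off by restricting u to the two supports.  Phi(Upsilon) is
   a two-sided ideal of Phi(U_L), which gives normality.  Finally
   e_p - e_q + e_i - e_j with p outside {q, i, j} can only be a root if the
   terms -e_q and e_i cancel, i.e. q = i. *)

From HB Require Import structures.
From mathcomp Require Import all_boot all_order all_algebra.
From mathcomp Require Import zify.
Set Implicit Arguments. Unset Strict Implicit. Unset Printing Implicit Defensive.
Import GRing.Theory.
Local Open Scope ring_scope.

Section ZeroOff.
Variables (R : pzRingType) (n : nat).
Implicit Types (c : rel 'I_n) (A B g h : 'M[R]_n).

Definition zero_off c A := forall i j, ~~ c i j -> A i j = 0.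

Lemma zero_off0 c : zero_off c 0.
Proof. by move=> i j _; rewrite mxE. Qed.

Lemma zero_offD c A B : zero_off c A -> zero_off c B -> zero_off c (A + B).
Proof. by move=> zA zB i j cij; rewrite mxE zA // zB // addr0. Qed.

Lemma zero_offN c A : zero_off c A -> zero_off c (- A).
Proof. by move=> zA i j cij; rewrite mxE zA // oppr0. Qed.

Lemma zero_off_sub c1 c2 A : subrel c1 c2 -> zero_off c1 A -> zero_off c2 A.
Proof. by move=> c12 zA i j nc; apply: zA; apply: contra nc; apply: c12. Qed.

Lemma zero_off_mul c1 c2 c3 A B :
    (forall i k j, c1 i k -> c2 k j -> c3 i j) ->
  zero_off c1 A -> zero_off c2 B -> zero_off c3 (A *m B).
Proof.
move=> c123 zA zB i j nc; rewrite mxE big1 // => k _.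
have [c1ik|/zA->] := boolP (c1 i k); last by rewrite mul0r.
have [c2kj|/zB->] := boolP (c2 k j); last by rewrite mulr0.
by rewrite (c123 _ _ _ c1ik c2kj) in nc.
Qed.

Lemma zero_off_mul0 c1 c2 A B :
    (forall i k j, c1 i k -> c2 k j -> false) ->
  zero_off c1 A -> zero_off c2 B -> A *m B = 0.
Proof.
move=> c12 zA zB; apply/matrixP => i j.
by rewrite (zero_off_mul (c3 := fun _ _ => false) c12 zA zB) ?mxE.
Qed.

Lemma supported_onE c g : supported_on c g <-> zero_off c (g - 1%:M).
Proof.
split=> sg i j /sg; rewrite !mxE; first by move->; rewrite subrr.
by move/eqP; rewrite subr_eq0 => /eqP.
Qed.

Lemma supported_on_sub c1 c2 g : subrel c1 c2 -> supported_on c1 g -> supported_on c2 g.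
Proof. by move=> c12 /supported_onE zg; apply/supported_onE; apply: zero_off_sub zg. Qed.

Lemma supported_on_zero_off c g :
  supported_on c g -> zero_off (fun i j => c i j || (i == j)) g.
Proof. by move=> sg i j; rewrite negb_or => /andP[/sg-> /negbTE->]. Qed.

Lemma mulmx_sub1 g h :
  g *m h - 1%:M = (g - 1%:M) + (h - 1%:M) + (g - 1%:M) *m (h - 1%:M).
Proof.
rewrite mulmxBl !mulmxBr mul1mx !mulmx1.
by rewrite -addrA [h - _ + _]addrC subrK addrC addrA subrK.
Qed.

Lemma supported_on_mulmx c1 c2 g h :
    (forall i k j, c1 i k -> c2 k j -> false) ->
  supported_on c1 g -> supported_on c2 h -> g *m h = g + (h - 1%:M).
Proof.
move=> c12 /supported_onE zg /supported_onE zh; apply: (@addIr _ (- 1%:M)).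
by rewrite mulmx_sub1 (zero_off_mul0 c12 zg zh) addr0 addrAC.
Qed.

Lemma supported_on_comm c g h :
    (forall i k j, c i k -> c k j -> false) ->
  supported_on c g -> supported_on c h -> g *m h = h *m g.
Proof. by move=> cc sg sh; rewrite !(supported_on_mulmx cc) // addrCA. Qed.

End ZeroOff.

Section Factorization.
Variables (R : pzRingType) (n : nat) (c1 c2 : rel 'I_n).
Hypotheses (c12_disjoint : forall i j, c1 i j -> c2 i j -> false)
           (c12_nocompose : forall i k j, c1 i k -> c2 k j -> false).
Implicit Types (a b g : 'M[R]_n).

Definition restrict_mx (c : rel 'I_n) g : 'M[R]_n :=
  \matrix_(i, j) if c i j then g i j else (i == j)%:R.

Lemma supported_on_restrict c g : supported_on c (restrict_mx c g).
Proof. by move=> i j /negbTE nc; rewrite mxE nc. Qed.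

Lemma restrict_mx_mull a b :
  supported_on c1 a -> supported_on c2 b -> restrict_mx c1 (a *m b) = a.
Proof.
move=> sa sb; apply/matrixP => i j; rewrite (supported_on_mulmx c12_nocompose) // !mxE.
case: ifP => [c1ij|/negbT/sa-> //].
rewrite sb ?subrr ?addr0 //; by apply/negP => /(c12_disjoint c1ij).
Qed.

Lemma restrict_mx_mulr a b :
  supported_on c1 a -> supported_on c2 b -> restrict_mx c2 (a *m b) = b.
Proof.
move=> sa sb; apply/matrixP => i j; rewrite (supported_on_mulmx c12_nocompose) // !mxE.
case: ifP => [c2ij|/negbT/sb-> //].
rewrite sa; first by rewrite addrC subrK.
by apply/negP => /c12_disjoint/(_ c2ij).
Qed.

Lemma restrict_mx_mulE g : supported_on (fun i j => c1 i j || c2 i j) g ->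
  restrict_mx c1 g *m restrict_mx c2 g = g.
Proof.
move=> sg; apply/matrixP => i j.
rewrite (supported_on_mulmx c12_nocompose (@supported_on_restrict c1 g)
  (@supported_on_restrict c2 g)) !mxE.
case: ifP => [c1ij|nc1]; last case: ifP => [c2ij|nc2].
- by rewrite ifF ?subrr ?addr0 //; apply/negP => /(c12_disjoint c1ij).
- by rewrite addrC subrK.
- by rewrite subrr addr0 sg // nc1 nc2.
Qed.

Lemma supported_on_factor g : supported_on (fun i j => c1 i j || c2 i j) g ->
  exists! ab : 'M[R]_n * 'M[R]_n,
    [/\ supported_on c1 ab.1, supported_on c2 ab.2 & g = ab.1 *m ab.2].
Proof.
move=> sg; exists (restrict_mx c1 g, restrict_mx c2 g).
split; first by split; [apply: supported_on_restrict.. | rewrite restrict_mx_mulE].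
by move=> [a b] /= [sa sb ->]; rewrite restrict_mx_mull ?restrict_mx_mulr.
Qed.

End Factorization.

Section Unipotent.
Variables (R : comUnitRingType) (n : nat) (c : rel 'I_n.+1).
Hypotheses (c_lt : forall i j, c i j -> (i < j)%N)
           (c_trans : forall i k j, c i k -> c k j -> c i j).

Lemma zero_off_nilpotent (N : 'M[R]_n.+1) : zero_off c N -> N ^+ n.+1 = 0.
Proof.
move=> zN; have zNk k : zero_off (fun i j => (i + k < j)%N) (N ^+ k.+1).
  elim: k => [|k IHk].
    by rewrite expr1; apply: zero_off_sub zN => i j /c_lt; rewrite addn0.
  by rewrite exprS -mulmxE; apply: zero_off_mul zN IHk => i l j /c_lt; lia.
by apply/matrixP => i j; rewrite mxE zNk //; have := ltn_ord j; lia.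
Qed.

Lemma zero_off_exp (N : 'M[R]_n.+1) k : zero_off c N -> zero_off c (N ^+ k.+1).
Proof.
move=> zN; elim: k => [|k IHk]; first by rewrite expr1.
by rewrite exprS -mulmxE; apply: zero_off_mul zN IHk.
Qed.

Lemma unipotent_invmx (g : 'M[R]_n.+1) : zero_off c (g - 1%:M) ->
  g \in unitmx /\ zero_off c (invmx g - 1%:M).
Proof.
move=> zN; set N := g - 1%:M; set S := \sum_(k < n.+1) (- N) ^+ k.
(* N is nilpotent, so the Neumann series of (1 + N)^-1 terminates. *)
have gS : g *m S = 1%:M.
  have := subrX1 (- N) n.+1.
  rewrite (zero_off_nilpotent (zero_offN zN)) sub0r -opprD mulNr => /oppr_inj.
  by rewrite subrK mulmxE.
have [gU _] := mulmx1_unit gS.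
have -> : invmx g = S by rewrite -[S](mulKmx gU) gS mulmx1.
split=> //; rewrite /S big_ord_recl expr0 -[1]/(1%:M) [1%:M + _]addrC addrK.
apply: (big_ind (zero_off c)); [exact: zero_off0 | exact: zero_offD |] => k _.
exact/zero_off_exp/zero_offN.
Qed.

Lemma supported_on_subgroup : is_subgroup (@supported_on R _ c).
Proof.
split.
- by apply/supported_onE; rewrite subrr; apply: zero_off0.
- move=> g h /supported_onE zg /supported_onE zh; apply/supported_onE.
  rewrite mulmx_sub1; apply: zero_offD; first exact: zero_offD.
  exact: zero_off_mul zg zh.
- move=> g /supported_onE /unipotent_invmx[gU zg]; split=> //.
  exact/supported_onE.
Qed.

Variable c' : rel 'I_n.+1.
Hypotheses (c'_ideall : forall i k j, c i k -> c' k j -> c' i j)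
           (c'_idealr : forall i k j, c' i k -> c k j -> c' i j).

Lemma supported_on_conj (u g : 'M[R]_n.+1) :
  supported_on c u -> supported_on c' g -> supported_on c' (u *m g *m invmx u).
Proof.
move=> su /supported_onE zg; apply/supported_onE.
have [_ _ /(_ u su)[uU sui]] := supported_on_subgroup.
have -> : u *m g *m invmx u - 1%:M = u *m (g - 1%:M) *m invmx u.
  by rewrite mulmxBr mulmx1 mulmxBl mulmxV.
apply: (zero_off_mul (c1 := c')) (supported_on_zero_off sui).
  by move=> i k j c'ik /orP[/(c'_idealr c'ik) // | /eqP <-].
apply: zero_off_mul (supported_on_zero_off su) zg.
by move=> i k j /orP[cik /(c'_ideall cik) | /eqP ->].
Qed.

End Unipotent.

Lemma congr_mod_gap (d i j : nat) :
  (0 < d)%N -> (i < j)%N -> (i %% d = j %% d)%N -> (i + d <= j)%N.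
Proof.
move=> d_gt0 ij eq_mod.
have : (d %| j - i)%N by rewrite -eqn_mod_dvd ?(ltnW ij) // eq_mod.
by move/dvdn_leq; rewrite subn_gt0 => /(_ ij); lia.
Qed.

Section RootSets.
Variables (n d : nat).
Implicit Types i j k : 'I_n.

Lemma Phi_UL_lt i j : Phi_UL d i j -> (i < j)%N.
Proof. by case/andP. Qed.

Lemma Phi_UL_trans i k j : Phi_UL d i k -> Phi_UL d k j -> Phi_UL d i j.
Proof. by move=> /andP[? /eqP ?] /andP[? /eqP ?]; apply/andP; split; lia. Qed.

Lemma Phi_Uphi_trans i k j : Phi_Uphi d i k -> Phi_Uphi d k j -> Phi_Uphi d i j.
Proof. by move=> /and3P[? ? /eqP ?] /and3P[? ? /eqP ?]; apply/and3P; split; lia. Qed.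

Lemma Phi_Ups_lt i j : Phi_Ups d i j -> (i < j)%N.
Proof. by case/and3P=> ? ? _; lia. Qed.

Lemma Phi_Ups_nocompose i k j : Phi_Ups d i k -> Phi_Ups d k j -> false.
Proof. by case/and3P=> ? ? ? /and3P[]; lia. Qed.

Lemma Phi_Uphi_Ups_nocompose i k j : Phi_Uphi d i k -> Phi_Ups d k j -> false.
Proof. by case/and3P=> ? ? ? /and3P[]; lia. Qed.

Lemma Phi_Uphi_Ups_disjoint i j : Phi_Uphi d i j -> Phi_Ups d i j -> false.
Proof. by case/and3P=> ? ? ? /and3P[]; lia. Qed.

Lemma Phi_UL_Ups i k j : Phi_UL d i k -> Phi_Ups d k j -> Phi_Ups d i j.
Proof. by move=> /andP[? /eqP ?] /and3P[? ? /eqP ?]; apply/and3P; split; lia. Qed.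

Lemma Phi_Ups_UL i k j : Phi_Ups d i k -> Phi_UL d k j -> Phi_Ups d i j.
Proof. by move=> /and3P[? ? /eqP ?] /andP[? /eqP ?]; apply/and3P; split; lia. Qed.

Lemma Phi_Ups_inj p p' i : Phi_Ups d p i -> Phi_Ups d p' i -> p = p'.
Proof.
move=> /and3P[pd _ /eqP ip] /and3P[p'd _ /eqP ip']; apply: val_inj.
by rewrite /= -(modn_small pd) -(modn_small p'd) -ip -ip'.
Qed.

Hypothesis d_gt0 : (0 < d)%N.

Lemma Phi_Uphi_lt i j : Phi_Uphi d i j -> (i < j)%N.
Proof. by case/and3P=> _ ? _; lia. Qed.

Lemma Phi_ULE i j : Phi_UL d i j = Phi_Uphi d i j || Phi_Ups d i j.
Proof.
apply/andP/orP => [[ij /eqP ij_mod] | ].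
  have := congr_mod_gap d_gt0 ij ij_mod.
  by rewrite /Phi_Uphi /Phi_Ups ij_mod eqxx !andbT; case: leqP => _ ->; [left|right].
by case=> /and3P[? ? /eqP ?]; split; [lia | apply/eqP | lia | apply/eqP].
Qed.

Lemma Phi_Ups_exists i : (d <= i)%N -> exists p : 'I_n, Phi_Ups d p i.
Proof.
move=> di; have p_lt : (i %% d < n)%N := leq_ltn_trans (leq_mod i d) (ltn_ord i).
exists (Ordinal p_lt); apply/and3P; split=> /=; rewrite ?ltn_pmod ?modn_mod //.
by rewrite [X in (_ <= X)%N](divn_eq i d) addnC leq_add2r leq_pmull // divn_gt0.
Qed.

End RootSets.

Section Roots.
Variable n : nat.
Implicit Types a b i j k p q : 'I_n.

Lemma rootvec_add p i j k : rootvec p i k + rootvec i j k = rootvec p j k.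
Proof. by rewrite /rootvec addrA subrK. Qed.

Lemma is_root_rootvec_add p i j :
  p != j -> is_root_GL (fun k => rootvec p i k + rootvec i j k).
Proof. by move=> pj; exists p, j; split=> // k; rewrite rootvec_add. Qed.

Lemma rootvec_eq1 a b k : rootvec a b k = 1 -> k = a.
Proof. by rewrite /rootvec; case: eqP => // _; case: (k == b). Qed.

Lemma is_root_rootvec_add_chain p q i j :
    p != q -> p != i -> p != j -> i != j ->
  is_root_GL (fun k => rootvec p q k + rootvec i j k) -> q = i.
Proof.
move=> npq npi npj nij [a [b [_ e]]]; case: (eqVneq q i) => // nqi.
have pa : p = a.
  apply: (rootvec_eq1 (b := b)).
  by rewrite -e /rootvec eqxx (negbTE npq) (negbTE npi) (negbTE npj).
have ia : i = a.
  apply: (rootvec_eq1 (b := b)); rewrite -e /rootvec eqxx (eq_sym i p) (eq_sym i q).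
  by rewrite (negbTE npi) (negbTE nqi) (negbTE nij).
by rewrite pa ia eqxx in npi.
Qed.

End Roots.

Lemma Phi_Uphi_root_partner n d (i j p q : 'I_n) :
    Phi_Uphi d i j -> Phi_Ups d p q ->
    is_root_GL (fun k => rootvec p q k + rootvec i j k) ->
  [/\ (p < d)%N, (p %% d = i %% d)%N, q = i &
      forall k, rootvec p q k + rootvec i j k = rootvec p j k].
Proof.
move=> /and3P[di ij _] /and3P[pd pq /eqP ip] root.
have qi : q = i.
  by apply: (is_root_rootvec_add_chain _ _ _ _ root); rewrite -val_eqE /=; lia.
by subst q; split=> // k; rewrite rootvec_add.
Qed.

Theorem lemma10p1 (R : comUnitRingType) (n d : nat) (hd1 : (1 <= d)%N) (hdn : (d <= n)%N) :
  (* Upsilon is a subgroup of U_L *)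
  (is_subgroup (@Upsilon R n d) /\ (forall g : 'M[R]_n, Upsilon d g -> U_L d g)) /\
  (* Upsilon is commutative *)
  (forall g h : 'M[R]_n, Upsilon d g -> Upsilon d h -> g *m h = h *m g) /\
  (* Upsilon is normal in U_L *)
  (forall u g : 'M[R]_n, U_L d u -> Upsilon d g -> Upsilon d (u *m g *m invmx u)) /\
  (* U_L = U_phi |x Upsilon : U_phi is a subgroup of U_L and every element of U_L
     is uniquely a product a * b with a in U_phi, b in Upsilon *)
  (is_subgroup (@U_phi R n d) /\ (forall g : 'M[R]_n, U_phi d g -> U_L d g)) /\
  (forall u : 'M[R]_n, U_L d u ->
     exists! ab : 'M[R]_n * 'M[R]_n,
       [/\ U_phi d ab.1, Upsilon d ab.2 & u = ab.1 *m ab.2]) /\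
  (* root statement *)
  (forall i j : 'I_n, Phi_Uphi d i j ->
     (exists! pq : 'I_n * 'I_n,
        Phi_Ups d pq.1 pq.2 /\
        is_root_GL (fun k => rootvec pq.1 pq.2 k + rootvec i j k)) /\
     (forall p q : 'I_n, Phi_Ups d p q ->
        is_root_GL (fun k => rootvec p q k + rootvec i j k) ->
        [/\ (p < d)%N, (p %% d = i %% d)%N, q = i &
            forall k, rootvec p q k + rootvec i j k = rootvec p j k])).
Proof.
case: n hdn => [|n] hdn; first by case: d hd1 hdn.
have Ups_trans (i k j : 'I_n.+1) : Phi_Ups d i k -> Phi_Ups d k j -> Phi_Ups d i j.
  by move=> /Phi_Ups_nocompose/[apply].
split; [split|].
  exact: supported_on_subgroup (@Phi_Ups_lt _ _) Ups_trans.
  by move=> g; apply: supported_on_sub => i j; rewrite Phi_ULE // => ->; rewrite orbT.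
split; first by move=> g h; apply: supported_on_comm; apply: Phi_Ups_nocompose.
split.
  move=> u g; apply: supported_on_conj.
  - exact: Phi_UL_lt.
  - exact: Phi_UL_trans.
  - exact: Phi_UL_Ups.
  - exact: Phi_Ups_UL.
split; [split|].
  exact: supported_on_subgroup (Phi_Uphi_lt hd1) (@Phi_Uphi_trans _ _).
  by move=> g; apply: supported_on_sub => i j; rewrite Phi_ULE // => ->.
split.
  move=> u su; apply: supported_on_factor.
  - exact: Phi_Uphi_Ups_disjoint.
  - exact: Phi_Uphi_Ups_nocompose.
  - by apply: supported_on_sub su => i j; rewrite Phi_ULE.
move=> i j hij; split=> [|p q]; last exact: Phi_Uphi_root_partner.
have [di ij _] := and3P hij; have [p hp] := Phi_Ups_exists hd1 di.
exists (p, i); split.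
  split=> //; apply: is_root_rootvec_add.
  by rewrite -val_eqE /=; case/and3P: hp => pd _ _; lia.
move=> [p' q'] /= [hp' /(Phi_Uphi_root_partner hij hp')[_ _ qi _]].
by subst q'; rewrite (Phi_Ups_inj hp hp').
Qed.
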